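(* Let $G=(V,E)$ be a connected graph, let $k$ be an integer with $1\le k\le |V|$, and let $D$, $A$, $\rho$, $\alpha$ and $d$ be as described in the context (in particular $|V\setminus D|\ge k$). Let $x$ be an optimal solution of the reduced ILP described in the context. Suppose the solution is sufficient, i.e. for every $v\in V\setminus A$ we have $x_{v,d(v)}=0$ or $d(v)\ge \mathrm{ecc}(v)$. Then $S^*=\{v\in V\setminus D : x_{v,0}=1\}$ satisfies $|S^*|=k$ and $$f(S^* )=\min\{f(S) : S\subseteq V,\ |S|=k\},$$ i.e. $S^*$ is a globally optimal solution of Group Closeness Centrality Maximization; moreover the optimal objective value of the reduced ILP equals $f(S^* )$.
   Context: All graphs are finite, undirected, unweighted, without self-loops, and connected. $\mathrm{dist}(u,v)$ is the shortest-path distance; for $S\subseteq V$ nonempty, $\mathrm{dist}(u,S)=\min_{s\in S}\mathrm{dist}(u,s)$. The group farness is $f(S)=\sum_{u\in V}\mathrm{dist}(u,S)$; Group Closeness Centrality Maximization asks for $S\subseteq V$ with $|S|=k$ maximizing $c(S)=(|V|-|S|)/f(S)$, equivalently minimizing $f(S)$. The eccentricity is $\mathrm{ecc}(v)=\max_{u\in V}\mathrm{dist}(u,v)$. $N[v]$ is the closed neighborhood of $v$; a vertex $u$ dominates $v$ if $N[v]\subseteq N[u]$. Data: (i) $D\subseteq V$ is a set of vertices such that every $v\in D$ is dominated by some vertex $u\in V\setminus D$, and $|V\setminus D|\ge k$. (ii) $A\subseteq D$ is a set of ''absorbed'' vertices with a map $\rho:A\to V\setminus A$ such that for every $u\in\rho(A)$,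 the set $\rho^{-1}(u)$ is a union of vertex sets of connected components of $G-u$, each such component is contained in $D$, and every vertex $w\in\rho^{-1}(u)$ is dominated by $u$. For $u\in V\setminus A$ let $\alpha(u)=|\rho^{-1}(u)|$ (so $\alpha(u)=0$ if $u\notin\rho(A)$). (iii) $d:V\setminus A\to\mathbb{Z}_{\ge 1}$ is any function. Reduced ILP: binary variables $x_{v,i}\in\{0,1\}$ for $v\in V\setminus A$ and $i\in\{0,\dots,d(v)\}$. Minimize $\sum_{v\in V\setminus A}\sum_{i=0}^{d(v)} x_{v,i}\,(\alpha(v)(i+1)+i)$ subject to (1) $\sum_{v\in V\setminus D} x_{v,0}=k$; (2) $\sum_{i=0}^{d(v)} x_{v,i}=1$ for all $v\in V\setminus A$; (3) $x_{v,i}\le \sum_{w\in V\setminus D:\ \mathrm{dist}(v,w)=i} x_{w,0}$ for all $v\in V\setminus A$ and all $i\in\{0,\dots,d(v)-1\}$ (an empty sum is $0$). The variable $x_{v,d(v)}$ is not subject to constraint (3); it encodes ''$\mathrm{dist}(v,S)\ge d(v)$'' where $S$ is the selected set. *)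

From mathcomp Require Import all_boot.
Set Implicit Arguments. Unset Strict Implicit. Unset Printing Implicit Defensive.

Section GraphDefs.
Variables (T : finType) (e : rel T).

Fixpoint ball (u : T) (n : nat) : {set T} :=
  match n with
  | 0 => [set u]
  | n'.+1 => ball u n' :|: [set y | [exists x in ball u n', e x y]]
  end.

(* shortest-path distance: least n with v in ball u n
   (for a connected graph on T this is < #|T|) *)
Definition dist (u v : T) : nat :=
  find (fun n => v \in ball u n) (iota 0 #|T|).

Definition distS (u : T) (S : {set T}) : nat :=
  \big[minn/#|T|]_(s in S) dist u s.

Definition farness (S : {set T}) : nat := \sum_(u : T) distS u S.

Definition ecc (v : T) : nat := \max_(u : T) dist u v.

Definition cnbhd (v : T) : {set T} := v |: [set w | e v w].

Definition dominates (u v : T) : bool := cnbhd v \subset cnbhd u.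

Definition compGminus (u w : T) : {set T} :=
  [set y | (y != u) && connect (fun a b => [&& e a b, a != u & b != u]) w y].

End GraphDefs.

Section ILP.
Variables (T : finType) (e : rel T) (D A : {set T}) (rho : T -> T)
          (d : T -> nat) (k : nat).

Definition alpha (u : T) : nat := #|[set w in A | rho w == u]|.

(* a candidate assignment x_{v,i} is a function x : T -> nat -> bool;
   only the coordinates v \notin A, i <= d v are meaningful *)
Definition ilp_obj (x : T -> nat -> bool) : nat :=
  \sum_(v in ~: A) \sum_(i < (d v).+1) (x v i : nat) * (alpha v * i.+1 + i).

Definition ilp_feasible (x : T -> nat -> bool) : Prop :=
  [/\ \sum_(v in ~: D) (x v 0 : nat) = k,
      (forall v, v \notin A -> \sum_(i < (d v).+1) (x v i : nat) = 1)
    & (forall v, v \notin A -> forall i, i < d v ->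
         (x v i : nat) <= \sum_(w in ~: D | dist e v w == i) (x w 0 : nat))].

Definition ilp_optimal (x : T -> nat -> bool) : Prop :=
  ilp_feasible x /\ forall y, ilp_feasible y -> ilp_obj x <= ilp_obj y.

End ILP.

From mathcomp Require Import all_boot zify.
Set Implicit Arguments. Unset Strict Implicit. Unset Printing Implicit Defensive.

(* For a set S avoiding D, an absorbed vertex w with rho(w) = u lies at distance
   dist(u,S) + 1 from S: its component of G - u misses S and u dominates w.  Hence
   alpha(u)(i+1) + i, with i = dist(u,S), is exactly the contribution of u and of
   the vertices it absorbs, and f(S) is the objective of the assignment
   x_{v,i} = [i = dist(v,S)].  So every k-set S inside V \ D yields a feasible
   assignment (capping i at d(v)) of objective at most f(S).  Conversely,
   constraint (3), and sufficiency for the unconstrained last column, put the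
   nonzero entry of row v of a feasible x at an index at least the distance from
   v to the selected set S*, so the objective of x is at least the farness of S*.
   Finally, trading a vertex of D for a dominating vertex outside D, or for a
   fresh vertex outside D when the dominator is already chosen, never increases
   farness, so an optimal k-set avoiding D exists. *)

Lemma bigminn_le (I : eqType) (r : seq I) (P : pred I) (F : I -> nat) a s :
  s \in r -> P s -> \big[minn/a]_(i <- r | P i) F i <= F s.
Proof.
elim: r => [|x r IH] //; rewrite inE big_cons => /orP [/eqP <- ->|Hs Ps]; first exact: geq_minl.
by case: (P x); [apply: leq_trans (geq_minr _ _) (IH Hs Ps)|apply: IH].
Qed.

Section Distances.
Variables (T : finType) (e : rel T).

Lemma ballS u n y :
  (y \in ball e u n.+1) = (y \in ball e u n) || [exists x in ball e u n, e x y].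
Proof. by rewrite /= !inE. Qed.

Lemma sub_ball u m n : m <= n -> {subset ball e u m <= ball e u n}.
Proof.
move=> /subnK <-; elim: (n - m) => [|j IH] y Hy //.
by rewrite addSn ballS IH.
Qed.

Lemma ball_trans u v w a b :
  v \in ball e u a -> w \in ball e v b -> w \in ball e u (a + b).
Proof.
move=> Hv; elim: b w => [|b IH] w.
  by rewrite addn0 /= inE => /eqP ->.
rewrite addnS !ballS => /orP [/IH -> //|/existsP [x /andP [Hx Hxw]]].
by apply/orP; right; apply/existsP; exists x; rewrite IH.
Qed.

Lemma edge_ball1 u v : e u v -> v \in ball e u 1.
Proof.
by move=> Huv; rewrite ballS; apply/orP; right; apply/existsP; exists u; rewrite /= inE eqxx.
Qed.

Lemma path_ball u p : path e u p -> last u p \in ball e u (size p).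
Proof.
elim: p u => [|y p IH] u /=; first by rewrite inE.
by move=> /andP [Huy /IH Hp]; apply: ball_trans (edge_ball1 Huy) Hp.
Qed.

Hypotheses (e_sym : symmetric e) (e_conn : forall u v : T, connect e u v).

Lemma ball_sym u v n : v \in ball e u n -> u \in ball e v n.
Proof.
elim: n u v => [|n IH] u v.
  by rewrite /= !inE => /eqP ->.
rewrite ballS => /orP [/IH Hu|/existsP [x /andP [Hx Hxv]]].
  exact: sub_ball (leqnSn n) _ Hu.
rewrite -add1n; apply: ball_trans (IH _ _ Hx).
by rewrite edge_ball1 // e_sym.
Qed.

Lemma has_ball_iota u v : has (fun n => v \in ball e u n) (iota 0 #|T|).
Proof.
have /connectP [p Hp ->] := e_conn u v.
case: (shortenP Hp) => p' Hp' Hu _.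
apply/hasP; exists (size p'); last exact: path_ball.
rewrite mem_iota add0n /=; have := card_uniqP Hu => /= <-; exact: max_card.
Qed.

Lemma dist_lt_card u v : dist e u v < #|T|.
Proof. by have := has_ball_iota u v; rewrite has_find size_iota. Qed.

Lemma mem_ball_dist u v : v \in ball e u (dist e u v).
Proof. by have := nth_find 0 (has_ball_iota u v); rewrite nth_iota ?add0n ?dist_lt_card. Qed.

Lemma dist_le_ball u v n : v \in ball e u n -> dist e u v <= n.
Proof.
move=> Hb; rewrite leqNgt; apply/negP => Hlt.
have := before_find 0 Hlt.
by rewrite nth_iota ?add0n ?Hb // (ltn_trans Hlt (dist_lt_card u v)).
Qed.

Lemma dist_triangle u v w : dist e u w <= dist e u v + dist e v w.
Proof. exact/dist_le_ball/ball_trans/mem_ball_dist/mem_ball_dist. Qed.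

Lemma dist_eq0 u v : (dist e u v == 0) = (u == v).
Proof.
apply/idP/eqP => [|->]; last by rewrite -leqn0 dist_le_ball //= inE.
by move=> /eqP H; have := mem_ball_dist u v; rewrite H /= inE => /eqP.
Qed.

Lemma dist_xx u : dist e u u = 0.
Proof. by apply/eqP; rewrite dist_eq0. Qed.

Lemma dist_edge u v : e u v -> dist e u v <= 1.
Proof. by move=> /edge_ball1 /dist_le_ball. Qed.

Lemma distC u v : dist e u v = dist e v u.
Proof. by apply/eqP; rewrite eqn_leq !dist_le_ball // ball_sym // mem_ball_dist. Qed.

Lemma dist_dominated_le1 u v : dominates e u v -> dist e v u <= 1.
Proof.
move=> Hdom; have : v \in cnbhd e u by apply: (subsetP Hdom); rewrite !inE eqxx.
rewrite !inE => /orP [/eqP ->|Huv]; first by rewrite dist_xx.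
by rewrite distC dist_edge.
Qed.

Lemma dist_dominates u v y : dominates e u v -> y != v -> dist e y u <= dist e y v.
Proof.
move=> Hdom Hyv; have := mem_ball_dist y v.
case Hn: (dist e y v) => [|m]; first by move: Hn => /eqP; rewrite dist_eq0 (negbTE Hyv).
rewrite ballS => /orP [/dist_le_ball|/existsP [z /andP [Hz Hzv]]]; first by rewrite Hn ltnn.
have : z \in cnbhd e u by apply: (subsetP Hdom); rewrite !inE e_sym Hzv orbT.
rewrite !inE => /orP [/eqP <-|Huz]; first exact/dist_le_ball/(sub_ball (leqnSn m)).
by apply: dist_le_ball; rewrite ballS; apply/orP; right; apply/existsP; exists z; rewrite Hz e_sym.
Qed.

Lemma distS_le u (S : {set T}) s : s \in S -> distS e u S <= dist e u s.
Proof. by move=> Hs; apply: bigminn_le; rewrite ?mem_index_enum. Qed.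

Lemma distS_attained u (S : {set T}) : S != set0 ->
  exists2 s, s \in S & distS e u S = dist e u s.
Proof.
case/set0Pn => s0 Hs0.
have : distS e u S = #|T| \/ exists2 s, s \in S & distS e u S = dist e u s.
  rewrite /distS; elim/big_ind: _ => [|a b Ha Hb|s Hs]; [by left| |by right; exists s].
  by rewrite /minn; case: ifP.
case=> // HT; have := distS_le u Hs0; have := dist_lt_card u s0; rewrite HT; lia.
Qed.

Lemma distS_eq0 u (S : {set T}) : (distS e u S == 0) = (u \in S).
Proof.
apply/idP/idP => [|Hu]; last by rewrite -leqn0 -(dist_xx u) distS_le.
have [->|/(distS_attained u) [s Hs ->]] := eqVneq S set0.
  by rewrite /distS big_pred0 => [/eqP/card0_eq/(_ u)|s]; rewrite ?inE.
by rewrite dist_eq0 => /eqP ->.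
Qed.

Lemma dist_lt_outside_comp u w s :
  w != u -> s \notin compGminus e u w -> dist e u s < dist e w s.
Proof.
move=> Hwu Hs.
suff reach n y : y \in ball e w n -> y \in compGminus e u w \/ dist e u y < n.
  by case: (reach _ _ (mem_ball_dist w s)) => // Hc; rewrite Hc in Hs.
elim: n y => [|n IH] y.
  by rewrite /= inE => /eqP ->; left; rewrite inE Hwu connect0.
rewrite ballS => /orP [/IH [|Hlt]|/existsP [z /andP [/IH Hz Hzy]]]; [by left|by right; lia|].
have [->|Hyu] := eqVneq y u; first by right; rewrite dist_xx.
case: Hz => [|Hlt]; last by right; have := dist_triangle u z y; have := dist_edge Hzy; lia.
rewrite /compGminus !inE => /andP [Hzu Hwz]; left; rewrite Hyu /=.
by apply: connect_trans Hwz (connect1 _); rewrite Hzy Hzu Hyu.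
Qed.

Lemma distS_absorbed u w (S : {set T}) :
  S != set0 -> w != u -> dominates e u w -> [disjoint compGminus e u w & S] ->
  distS e w S = (distS e u S).+1.
Proof.
move=> HS Hwu Hdom Hdisj.
have [su Hsu Eu] := distS_attained u HS.
have [sw Hsw Ew] := distS_attained w HS.
have Hcomp : sw \notin compGminus e u w by rewrite (disjointFl Hdisj).
have := distS_le w Hsu; have := dist_triangle w u su; have := dist_dominated_le1 Hdom.
have := distS_le u Hsw; have := dist_lt_outside_comp Hwu Hcomp; lia.
Qed.

Lemma farness_exchange (S : {set T}) v w u :
  v \in S -> w \notin S -> u \in w |: (S :\ v) -> dominates e u v ->
  farness e (w |: (S :\ v)) <= farness e S.
Proof.
move=> HvS HwS HuS' Hdom.
have Hwv : w != v by apply: contraNneq HwS => ->.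
have HS : S != set0 by apply/set0Pn; exists v.
have split_vw (F : T -> nat) :
    \sum_y F y = F v + F w + \sum_(y | (y != v) && (y != w)) F y.
  by rewrite (bigD1 v) // (bigD1 w) //= addnA.
rewrite /farness !split_vw; apply: leq_add.
  have Hv0 : distS e v S = 0 by apply/eqP; rewrite distS_eq0.
  have Hw0 : distS e w (w |: (S :\ v)) = 0 by apply/eqP; rewrite distS_eq0 setU11.
  have Hw1 : 0 < distS e w S by rewrite lt0n distS_eq0.
  have := distS_le v HuS'; have := dist_dominated_le1 Hdom; lia.
apply: leq_sum => y /andP [Hyv _]; have [s Hs ->] := distS_attained y HS.
have [Esv|Hsv] := eqVneq s v.
  by apply: leq_trans (distS_le y HuS') _; rewrite Esv dist_dominates.
by apply: distS_le; rewrite !inE Hsv Hs orbT.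
Qed.

Lemma farness_avoid_dominated (D S : {set T}) :
  (forall v, v \in D -> exists2 u, u \notin D & dominates e u v) -> #|S| <= #|~: D| ->
  exists S' : {set T}, [/\ S' \subset ~: D, #|S'| = #|S| & farness e S' <= farness e S].
Proof.
move=> HD; have [n] := ubnP #|S :&: D|; elim: n S => // n IH S HSn HSD.
have [HS0|/set0Pn [v]] := eqVneq (S :&: D) set0.
  exists S; split=> //; apply/subsetP => y Hy; rewrite inE; apply/negP => HyD.
  by have := in_set0 y; rewrite -HS0 !inE Hy HyD.
rewrite inE => /andP [HvS HvD].
have [u HuD Hdom] := HD v HvD.
have [w [HwD HwS Hu]] : exists w, [/\ w \notin D, w \notin S & u \in w |: S].
  case/boolP: (u \in S) => HuS; last by exists u; rewrite !inE eqxx.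
  have : 0 < #|S :\: ~: D| by apply/card_gt0P; exists v; rewrite !inE HvS HvD.
  have := cardsID (~: D) S; have := cardsID S (~: D); rewrite setIC.
  move=> ES EnD Hv; have /card_gt0P [w] : 0 < #|~: D :\: S| by lia.
  by rewrite !inE => /andP [HwS HwD]; exists w; rewrite !inE HuS orbT.
have Hwv : w != v by apply: contraNneq HwS => ->.
have Huv : u != v by apply: contraNneq HuD => ->.
have HuS1 : u \in w |: (S :\ v) by move: Hu; rewrite !inE Huv.
have HS1 : #|w |: (S :\ v)| = #|S|.
  by rewrite cardsU1 !inE Hwv HwS [in RHS](cardsD1 v S) HvS.
have HS1D : #|(w |: (S :\ v)) :&: D| < n.
  rewrite -ltnS; apply: leq_trans HSn; rewrite ltnS (cardsD1 v (S :&: D)) !inE HvS HvD add1n.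
  apply: subset_leq_card; apply/subsetP => y; rewrite !inE.
  by case: eqP => [->|_ /=]; [rewrite (negbTE HwD) andbF | rewrite andbA].
have := IH _ HS1D; rewrite HS1 => /(_ HSD) [S' [HS'D HS'card HS'far]].
exists S'; split=> //.
exact: leq_trans HS'far (farness_exchange HvS HwS HuS1 Hdom).
Qed.
End Distances.

Lemma sum_eq_onehot n m (F : nat -> nat) : m < n ->
  \sum_(i < n) ((i == m :> nat) : nat) * F i = F m.
Proof.
move=> ltmn; transitivity (\sum_(i < n | i == m :> nat) F i); last by rewrite big_ord1_eq ltmn.
by rewrite [RHS]big_mkcond; apply: eq_bigr => i _; case: (_ == _); rewrite ?mul1n.
Qed.

Lemma sum_row_onehot n (f : nat -> bool) : \sum_(i < n) (f i : nat) = 1 ->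
  exists m, [/\ m < n, f m & forall F : nat -> nat, \sum_(i < n) (f i : nat) * F i = F m].
Proof.
move/eqP/sum_nat_eq1 => [i [_ fi1 f0]].
exists i; split; [exact: ltn_ord | by move: fi1; case: (f i) | move=> F].
rewrite -(sum_eq_onehot F (ltn_ord i)); apply: eq_bigr => j _; congr (_ * _).
have [->|Hji] := eqVneq j i; first by rewrite eqxx; move: fi1; case: (f i).
by rewrite (f0 j Hji) // val_eqE (negbTE Hji).
Qed.

Section ReducedILP.
Variables (T : finType) (e : rel T) (D A : {set T}) (rho : T -> T)
          (d : T -> nat) (k : nat).
Hypotheses (e_sym : symmetric e) (e_conn : forall u v : T, connect e u v).
Hypotheses (A_sub_D : A \subset D) (k_gt0 : 0 < k)
           (d_gt0 : forall v, v \notin A -> 0 < d v).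
Hypothesis rho_notin : forall w, w \in A -> rho w \notin A.
Hypothesis rho_comp : forall u, u \in rho @: A ->
  forall w, w \in [set w in A | rho w == u] ->
    [/\ w != u,
        compGminus e u w \subset [set w in A | rho w == u],
        compGminus e u w \subset D
      & dominates e u w].

Lemma farness_absorbed (S : {set T}) : S != set0 -> S \subset ~: D ->
  farness e S = \sum_(v in ~: A) (alpha A rho v * (distS e v S).+1 + distS e v S).
Proof.
move=> HS HSD.
rewrite big_split /= /farness (bigID (fun v => v \in A)).
congr (_ + _); last by apply: eq_bigl => v; rewrite inE.
have Ealpha v : v \in ~: A ->
    alpha A rho v * (distS e v S).+1 = \sum_(w | (w \in A) && (rho w == v)) distS e w S.
  move=> Hv; rewrite /alpha -sum_nat_const; apply: eq_big => w; first by rewrite inE.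
  rewrite inE => /andP [HwA /eqP Hrw].
  have Hu : v \in rho @: A by rewrite -Hrw imset_f.
  have Hw : w \in [set w in A | rho w == v] by rewrite inE HwA Hrw eqxx.
  have [Hwv _ HCD Hdom] := rho_comp Hu Hw.
  rewrite (distS_absorbed e_sym e_conn HS Hwv Hdom) // (disjointWl HCD) //.
  by rewrite disjoint_sym disjoints_subset.
rewrite (eq_bigr _ Ealpha) -(partition_big rho (fun v => v \in ~: A)) //.
by move=> w Hw; rewrite inE rho_notin.
Qed.

Definition ilp_selected (x : T -> nat -> bool) : {set T} := [set v in ~: D | x v 0].

Definition ilp_sufficient (x : T -> nat -> bool) : Prop :=
  forall v, v \notin A -> x v (d v) = false \/ ecc e v <= d v.

Definition ilp_of_set (S : {set T}) (v : T) (i : nat) : bool :=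
  i == minn (distS e v S) (d v).

Lemma sum_selected (x : T -> nat -> bool) :
  \sum_(v in ~: D) (x v 0 : nat) = #|ilp_selected x|.
Proof. by rewrite -sum1dep_card big_mkcondr; apply: eq_bigr => v _; case: (x v 0). Qed.

Lemma ilp_selected_of_set (S : {set T}) : S \subset ~: D -> ilp_selected (ilp_of_set S) = S.
Proof.
move=> HSD; apply/setP => v; rewrite !inE /ilp_of_set.
case/boolP: (v \in D) => HvD /=.
  by apply/esym/negP => /(subsetP HSD); rewrite inE HvD.
have HvA : v \notin A by apply: contra HvD; apply: (subsetP A_sub_D).
have := d_gt0 HvA; rewrite -(distS_eq0 e_conn); case: (distS e v S); lia.
Qed.

Lemma ilp_of_set_feasible (S : {set T}) : S \subset ~: D -> #|S| = k ->
  ilp_feasible e D A d k (ilp_of_set S).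
Proof.
move=> HSD HSk; have HS : S != set0 by rewrite -card_gt0 HSk.
split=> [|v _|v _ i ltid].
- by rewrite sum_selected ilp_selected_of_set.
- have ltmd : minn (distS e v S) (d v) < (d v).+1 by rewrite ltnS geq_minr.
  by rewrite -(sum_eq_onehot (fun=> 1) ltmd); apply: eq_bigr => i _; rewrite muln1.
- rewrite /ilp_of_set; case: eqP => //= Ei.
  have [s Hs Es] := distS_attained e_conn v HS.
  rewrite (bigD1 s) /=; last by rewrite (subsetP HSD) //= -Es; apply/eqP; lia.
  have /eqP -> : distS e s S == 0 by rewrite (distS_eq0 e_conn).
  by rewrite /ilp_of_set min0n.
Qed.

Lemma ilp_obj_of_set (S : {set T}) : S != set0 -> S \subset ~: D ->
  ilp_obj A rho d (ilp_of_set S) <= farness e S.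
Proof.
move=> HS HSD; rewrite /ilp_obj (farness_absorbed HS HSD); apply: leq_sum => v _.
have ltmd : minn (distS e v S) (d v) < (d v).+1 by rewrite ltnS geq_minr.
rewrite /ilp_of_set (sum_eq_onehot (fun i => alpha A rho v * i.+1 + i) ltmd).
by apply: leq_add; [apply: leq_mul; rewrite // ltnS geq_minl | apply: geq_minl].
Qed.

Lemma card_ilp_selected x : ilp_feasible e D A d k x -> #|ilp_selected x| = k.
Proof. by case=> Hk _ _; rewrite -sum_selected. Qed.

Lemma ilp_selected_subset x : ilp_selected x \subset ~: D.
Proof. by apply/subsetP => v; rewrite inE => /andP []. Qed.

Lemma distS_selected_le x v i :
  ilp_feasible e D A d k x -> ilp_sufficient x -> v \notin A -> i <= d v -> x v i ->
  distS e v (ilp_selected x) <= i.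
Proof.
move=> Hx Hsuff Hv; have [_ _ Hcol] := Hx.
have /set0Pn [s0 Hs0] : ilp_selected x != set0 by rewrite -card_gt0 card_ilp_selected.
rewrite leq_eqVlt => /orP [/eqP -> xvd|ltid xvi].
  case: (Hsuff v Hv) => [|Hecc]; first by rewrite xvd.
  apply: leq_trans (distS_le e v Hs0) _; rewrite distC //.
  exact: leq_trans (@leq_bigmax _ (fun u => dist e u v) s0) Hecc.
have := Hcol v Hv i ltid; rewrite xvi lt0n sum_nat_eq0 => /forall_inPn [w /andP [HwD /eqP Hdw] Hxw].
have Hw : w \in ilp_selected x by rewrite inE HwD; move: Hxw; case: (x w 0).
by rewrite -Hdw distS_le.
Qed.

Lemma farness_selected_le_obj x : ilp_feasible e D A d k x -> ilp_sufficient x ->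
  farness e (ilp_selected x) <= ilp_obj A rho d x.
Proof.
move=> Hx Hsuff; have [_ Hrows _] := Hx.
have HS : ilp_selected x != set0 by rewrite -card_gt0 card_ilp_selected.
rewrite /ilp_obj (farness_absorbed HS (ilp_selected_subset x)); apply: leq_sum => v.
rewrite inE => Hv; have [m [ltm xvm rowE]] := sum_row_onehot (Hrows v Hv).
rewrite (rowE (fun i => alpha A rho v * i.+1 + i)).
have lejm := distS_selected_le Hx Hsuff Hv ltm xvm.
by apply: leq_add => //; apply: leq_mul.
Qed.

End ReducedILP.

Theorem mainTheorem1 (T : finType) (e : rel T)
  (e_sym : symmetric e) (e_irr : irreflexive e)
  (e_conn : forall u v : T, connect e u v)
  (k : nat) (k_ge1 : 1 <= k) (k_le : k <= #|T|)
  (D : {set T})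
  (HD : forall v, v \in D -> exists2 u, u \notin D & dominates e u v)
  (HDk : k <= #|~: D|)
  (A : {set T}) (rho : T -> T)
  (HAD : A \subset D)
  (Hrho : forall w, w \in A -> rho w \notin A)
  (Hcomp : forall u, u \in rho @: A ->
     forall w, w \in [set w in A | rho w == u] ->
       [/\ w != u,
           compGminus e u w \subset [set w in A | rho w == u],
           compGminus e u w \subset D
         & dominates e u w])
  (d : T -> nat) (Hd : forall v, v \notin A -> 1 <= d v)
  (x : T -> nat -> bool)
  (Hopt : ilp_optimal e D A rho d k x)
  (Hsuff : forall v, v \notin A -> x v (d v) = false \/ ecc e v <= d v) :
  let Sstar := [set v in ~: D | x v 0] in
  [/\ #|Sstar| = k,
      (forall S : {set T}, #|S| = k -> farness e Sstar <= farness e S)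
    & ilp_obj A rho d x = farness e Sstar].
Proof.
rewrite /= -/(ilp_selected D x); have [Hfeas Hmin] := Hopt.
have card_selected := card_ilp_selected Hfeas.
have obj_le (S : {set T}) : S \subset ~: D -> #|S| = k -> ilp_obj A rho d x <= farness e S.
  move=> HSD HSk; have HS : S != set0 by rewrite -card_gt0 HSk.
  exact: leq_trans (Hmin _ (ilp_of_set_feasible e_conn HAD k_ge1 Hd HSD HSk))
                   (ilp_obj_of_set d e_sym e_conn Hrho Hcomp HS HSD).
have obj_eq : ilp_obj A rho d x = farness e (ilp_selected D x).
  apply/eqP; rewrite eqn_leq obj_le ?(ilp_selected_subset D x) //=.
  by have := farness_selected_le_obj e_sym e_conn k_ge1 Hrho Hcomp Hfeas Hsuff.
split=> // S HSk.
have [|S' [HS'D HS'k HS'far]] := farness_avoid_dominated e_sym e_conn (S := S) HD.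
  by rewrite HSk.
by rewrite -obj_eq; apply: leq_trans HS'far; apply: obj_le; rewrite ?HS'k.
Qed.
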